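(* There exists a complete bifurcate tree over an alphabet of size $12$.
   Context: A square is a nonempty word of the form $XX$; a word is square-free if it has no (contiguous) factor that is a square. For a word $W$ of length $n$ and $0\le i\le n$, let $P_i(W)$, $S_i(W)$ be the prefix and suffix of $W$ of length $i$; an extension of $W$ at position $i$ over alphabet $\mathcal{A}$ is a word $P_i(W)\mathtt{x}S_{n-i}(W)$ with $\mathtt{x}\in\mathcal{A}$. A square-free word of length $n$ is bifurcate over $\mathcal{A}$ if for each position $i\in\{0,\dots,n\}$ it has a square-free extension at position $i$. A bifurcate tree over $\mathcal{A}$ is a family of bifurcate words over $\mathcal{A}$ arranged as a rooted tree in which the children (descendants) of a word $W$ are single-letter extensions of $W$ at pairwise different positions; thus a word of length $n$ has at most $n+1$ children. A bifurcate tree is complete if every word of length $n$ in it has exactly $n+1$ children (one extension at each position $0,\dots,n$); such a tree is necessarily infinite. *)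

From mathcomp Require Import all_boot.
Set Implicit Arguments. Unset Strict Implicit. Unset Printing Implicit Defensive.

Definition square_free (A : Type) (w : seq A) : Prop :=
  forall u X v : seq A, w = u ++ X ++ X ++ v -> X = [::].

Definition extension (A : Type) (w : seq A) (i : nat) (x : A) : seq A :=
  take i w ++ x :: drop i w.

Definition bifurcate (A : Type) (w : seq A) : Prop :=
  square_free w /\
  forall i, i <= size w -> exists x : A, square_free (extension w i x).

(* A complete tree rooted at [root] is encoded as a labelling [T] of
   addresses (sequences of positions) by words. The address [p] is a node
   iff its j-th entry is at most [size root + j] (the word at depth j has
   length [size root + j], so its children are at positions 0..size root + j). *)
Definition valid_address (n0 : nat) (p : seq nat) : bool :=
  all (fun j => nth 0 p j <= n0 + j) (iota 0 (size p)).

Definition complete_bifurcate_tree (A : Type) (T : seq nat -> seq A) : Prop :=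
  forall p, valid_address (size (T [::])) p ->
    bifurcate (T p) /\
    forall i, i <= size (T p) ->
      exists x : A, T (rcons p i) = extension (T p) i x.

(* Letters are pairs (layer, counter), and a word is well layered when
   adjacent layers differ by at most one and, whenever two positions of the
   same layer are separated only by higher layers, the counter goes up by one
   from the first to the second.  At every position some letter can be
   inserted keeping the word well layered, which yields the complete tree.
   The twelve colours record [spaced_vtm] of the layer and [vtm] of the
   counter, where [vtm] is the square-free ternary word coded from the
   two-sided Thue-Morse word and [spaced_vtm] is a square-free word over four
   letters whose letters at distance at most 2 differ.  In a square XX of
   colours the layers form a walk whose second half repeats the first up to
   [spaced_vtm]; this forces the layers themselves to repeat.  Reading the
   counters at the lowest layer, they increase by one from each occurrence to
   the next, so their [vtm] colours contain a square, a contradiction. *)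

From mathcomp Require Import all_boot zify.
From Stdlib Require Import ZArith Lia.

Set Implicit Arguments.
Unset Strict Implicit.
Unset Printing Implicit Defensive.

Open Scope Z_scope.

Definition odd_digit4 (j : Z) : bool := (j =? 1) || (j =? 2).

(* The two-sided Thue-Morse word is the fixed point of t(4k + j) = t(k) xor
   odd_digit4 j with t(0) = false and t(-1) = true; the binary recursion
   t(2k + 1) = ~~ t(k) is impossible at the fixed point -1 = 2 (-1) + 1. *)
Fixpoint tm_fuel (n : nat) (z : Z) : bool :=
  match n with
  | O => z <? 0
  | S n' => if (z =? 0) || (z =? -1) then z <? 0
            else xorb (odd_digit4 (z mod 4)) (tm_fuel n' (z / 4))
  end.

Definition tm (z : Z) : bool := tm_fuel (Z.to_nat (Z.abs z)) z.

Lemma Zabs_div4_lt z : z <> 0 -> z <> -1 -> Z.abs (z / 4) + 1 <= Z.abs z.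
Proof. by move=> z0 zN1; Z.div_mod_to_equations; lia. Qed.

Lemma tm_fuel_enough (n n' : nat) z :
  Z.abs z <= Z.of_nat n -> Z.abs z <= Z.of_nat n' -> tm_fuel n z = tm_fuel n' z.
Proof.
elim: n n' z => [|n IHn] [|n'] z /= zn zn' //; try by have -> : z = 0 by lia.
case: ifP => // z_nfix; congr xorb; move: (@Zabs_div4_lt z) => div4.
by apply: IHn; lia.
Qed.

Lemma tm_unfold z : tm z =
  if (z =? 0) || (z =? -1) then z <? 0 else xorb (odd_digit4 (z mod 4)) (tm (z / 4)).
Proof.
rewrite /tm; case: ifP => z_fix; first by have [->|->] : z = 0 \/ z = -1 by lia.
have -> : Z.to_nat (Z.abs z) = (Z.to_nat (Z.abs z) - 1).+1 by lia.
rewrite /= z_fix; congr xorb; move: (@Zabs_div4_lt z) => div4.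
by apply: tm_fuel_enough; lia.
Qed.

Lemma tm_base4 k j : 0 <= j < 4 -> tm (4 * k + j) = xorb (odd_digit4 j) (tm k).
Proof.
move=> j_lt4; rewrite tm_unfold.
case: ((4 * k + j =? 0) || (4 * k + j =? -1)) / orP => [[/Z.eqb_spec e | /Z.eqb_spec e]|_].
- by have [-> ->] : k = 0 /\ j = 0 by lia.
- by have [-> ->] : k = -1 /\ j = 3 by lia.
have -> : (4 * k + j) mod 4 = j by Z.div_mod_to_equations; lia.
by have -> : (4 * k + j) / 4 = k by Z.div_mod_to_equations; lia.
Qed.

Definition pair_alternating (X : Z -> bool) : Prop :=
  forall k, X (2 * k + 1) = ~~ X (2 * k).

Definition has_overlap (X : Z -> bool) (i p : Z) : Prop :=
  forall j, i <= j <= i + p -> X j = X (j + p).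

(* The pair {tm, tm (2 * _)} is closed under taking even-indexed subwords,
   which is what the induction on the period of an overlap needs. *)
Definition tm_pair (b : bool) (z : Z) : bool := if b then tm z else tm (2 * z).

Lemma tm_pair_double b k : tm_pair b (2 * k) = tm_pair (~~ b) k.
Proof.
case: b => //; rewrite /tm_pair; have -> : 2 * (2 * k) = 4 * k + 0 by lia.
by rewrite tm_base4; last lia.
Qed.

Lemma tm_pair_alternating b : pair_alternating (tm_pair b).
Proof.
move=> k; case: b; rewrite /tm_pair.
- have [[a ->]|[a ->]] := Z.Even_or_Odd k.
  + have -> : 2 * (2 * a) + 1 = 4 * a + 1 by lia.
    have -> : 2 * (2 * a) = 4 * a + 0 by lia.
    by rewrite !tm_base4; try lia.
  + have -> : 2 * (2 * a + 1) + 1 = 4 * a + 3 by lia.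
    have -> : 2 * (2 * a + 1) = 4 * a + 2 by lia.
    by rewrite !tm_base4; try lia; case: (tm a).
- have -> : 2 * (2 * k + 1) = 4 * k + 2 by lia.
  have -> : 2 * (2 * k) = 4 * k + 0 by lia.
  by rewrite !tm_base4; try lia; case: (tm k).
Qed.

Section PairAlternating.
Variable X : Z -> bool.
Hypothesis X_alt : pair_alternating X.

Lemma pair_alternating_no_cube i : X i = X (i + 1) -> X (i + 1) = X (i + 2) -> False.
Proof.
have [[a ->]|[a ->]] := Z.Even_or_Odd i; first by rewrite X_alt; case: (X (2 * a)) => /=.
have -> : 2 * a + 1 + 1 = 2 * (a + 1) by lia.
have -> : 2 * a + 1 + 2 = 2 * (a + 1) + 1 by lia.
by rewrite (X_alt (a + 1)) => _; case: (X (2 * (a + 1))) => /=.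
Qed.

Lemma overlap_even_period i q :
  has_overlap X i (2 * q) -> has_overlap (fun k => X (2 * k)) (i / 2) q.
Proof.
move=> ov k k_in; have [[a ia]|[a ia]] := Z.Even_or_Odd i.
- have -> : 2 * (k + q) = 2 * k + 2 * q by lia.
  by apply: ov; Z.div_mod_to_equations; lia.
- apply: negb_inj; rewrite -!X_alt.
  have -> : 2 * (k + q) + 1 = 2 * k + 1 + 2 * q by lia.
  by apply: ov; Z.div_mod_to_equations; lia.
Qed.

(* With an odd period, j and j + p lie in pairs of opposite parity, which
   forces X (j - 1) = X (j + 1) inside the overlap. *)
Lemma overlap_odd_skip i c j : has_overlap X i (2 * c + 1) ->
  i + 1 <= j <= i + 2 * c -> X (j - 1) = X (j + 1).
Proof.
move=> ov j_in; set p := 2 * c + 1 in ov.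
have [[a ja]|[a ja]] := Z.Even_or_Odd j.
- have e1 : X (j + 1) = ~~ X j by rewrite ja X_alt.
  have e2 : X (j + p) = ~~ X (j - 1 + p).
    have -> : j - 1 + p = 2 * (a + c) by rewrite /p; lia.
    by have -> : j + p = 2 * (a + c) + 1 by rewrite /p; lia.
  by rewrite e1 (ov j) ?e2 -?(ov (j - 1)) ?negbK //; lia.
- have e1 : X j = ~~ X (j - 1).
    have -> : j - 1 = 2 * a by lia.
    by rewrite ja X_alt.
  have e2 : X (j + 1 + p) = ~~ X (j + p).
    have -> : j + p = 2 * (a + c + 1) by rewrite /p; lia.
    by have -> : j + 1 + p = 2 * (a + c + 1) + 1 by rewrite /p; lia.
  by rewrite (ov (j + 1)) ?e2 -?(ov j) ?e1 ?negbK //; lia.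
Qed.

Lemma no_overlap_odd_period i c : 0 <= c -> ~ has_overlap X i (2 * c + 1).
Proof.
move=> c_ge0 ov.
have shift2 (t : nat) : 2 * Z.of_nat t <= 2 * c -> X (i + 1 + 2 * Z.of_nat t) = X (i + 1).
  elim: t => [|t IHt] t_le; first by rewrite Z.add_0_r.
  rewrite -IHt; last lia.
  have := @overlap_odd_skip i c (i + 2 + 2 * Z.of_nat t) ov ltac:(lia).
  have -> : i + 2 + 2 * Z.of_nat t - 1 = i + 1 + 2 * Z.of_nat t by lia.
  by have -> : i + 2 + 2 * Z.of_nat t + 1 = i + 1 + 2 * Z.of_nat t.+1 by lia.
have Xi1 : X i = X (i + 1).
  rewrite ov; last lia.
  by have := shift2 (Z.to_nat c) ltac:(lia); rewrite Z2Nat.id // => <-; congr X; lia.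
apply: (@pair_alternating_no_cube i) => //.
have [c0|c_gt0] : c = 0 \/ 0 < c by lia.
  by rewrite ov; [congr X | ]; lia.
have := @overlap_odd_skip i c (i + 1) ov ltac:(lia).
have -> : i + 1 - 1 = i by lia.
have -> : i + 1 + 1 = i + 2 by lia.
by rewrite -Xi1.
Qed.
End PairAlternating.

Lemma tm_pair_overlap_free (n : nat) b i p :
  0 < p <= Z.of_nat n -> ~ has_overlap (tm_pair b) i p.
Proof.
elim: n b i p => [|n IHn] b i p p_in ov; first lia.
have [[q pq]|[c pc]] := Z.Even_or_Odd p; last first.
  by rewrite pc in ov; apply: (no_overlap_odd_period (tm_pair_alternating b) _ ov); lia.
apply: (IHn (~~ b) (i / 2) q); first lia.
have halve := overlap_even_period (tm_pair_alternating b) (i := i) (q := q).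
rewrite -pq in halve; move=> k k_in; rewrite -!tm_pair_double.
exact: halve.
Qed.

Lemma tm_overlap_free i p : 0 < p -> ~ has_overlap tm i p.
Proof. by move=> p_gt0; apply: (@tm_pair_overlap_free (Z.to_nat p) true); lia. Qed.

Close Scope Z_scope.

Definition pair_code (x y : bool) : nat := if x == y then 1 else if x then 0 else 2.

Lemma pair_code_le2 x y : pair_code x y <= 2.
Proof. by case: x; case: y. Qed.

Lemma pair_code_eq x y x' y' :
  pair_code x y = pair_code x' y' -> (x == x') = (y == y').
Proof. by case: x; case: y; case: x'; case: y'. Qed.

Lemma pair_code_switch x y x' y' :
  pair_code x y = pair_code x' y' -> x != y -> x = x'.
Proof. by case: x; case: y; case: x'; case: y'. Qed.

(* Equal codes determine consecutive pairs up to complement, so the two words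
   agree on all of [0, r] or nowhere; they agree at any switch x != y, and a
   word without switches is constant. *)
Lemma pair_code_overlap (a : nat -> bool) r :
  (forall y, y < r -> pair_code (a y) (a y.+1) = pair_code (a (y + r)) (a (y + r).+1)) ->
  forall y, y <= r -> a y = a (y + r).
Proof.
move=> codes.
have agree y : y <= r -> (a y == a (y + r)) = (a 0 == a r).
  elim: y => [//|y IHy] y_le; rewrite -IHy ?(ltnW y_le) // addSn.
  by apply/esym/pair_code_eq/codes.
have a0r : a 0 = a r.
  apply/eqP/negPn/negP => a0r.
  have const y : y <= r -> a y = a 0.
    elim: y => [//|y IHy] y_le; rewrite -IHy ?(ltnW y_le) //.
    apply/esym/eqP/negPn/negP => switch.
    move/negbTE: a0r; rewrite -(agree y (ltnW y_le)).
    by rewrite (pair_code_switch (codes y y_le) switch) eqxx.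
  by move: a0r; rewrite -(const r (leqnn r)) eqxx.
by move=> y y_le; apply/eqP; rewrite agree // a0r.
Qed.

(* A square in [vtm] lifts to an overlap in [tm] (see [pair_code_overlap]). *)
Definition vtm (z : Z) : nat := pair_code (tm z) (tm (z + 1)).

Lemma vtm_le2 z : vtm z <= 2.
Proof. exact: pair_code_le2. Qed.

Lemma vtm_square_free z r : 0 < r ->
  ~ (forall y, y < r -> vtm (z + Z.of_nat y) = vtm (z + Z.of_nat y + Z.of_nat r)).
Proof.
move=> r_gt0 square.
have shift y : (z + Z.of_nat y + Z.of_nat r = z + Z.of_nat (y + r))%Z by lia.
have succ y : (z + Z.of_nat y + 1 = z + Z.of_nat y.+1)%Z by lia.
have codes y : y < r -> pair_code (tm (z + Z.of_nat y)) (tm (z + Z.of_nat y.+1)) =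
    pair_code (tm (z + Z.of_nat (y + r))) (tm (z + Z.of_nat (y + r).+1)).
  by move=> y_lt; have := square y y_lt; rewrite /vtm shift !succ -shift.
apply: (@tm_overlap_free z (Z.of_nat r)); first lia.
move=> j j_in; have := pair_code_overlap codes (y := Z.to_nat (j - z)) ltac:(lia).
have -> : (z + Z.of_nat (Z.to_nat (j - z) + r) = j + Z.of_nat r)%Z by lia.
by have -> : (z + Z.of_nat (Z.to_nat (j - z)) = j)%Z by lia.
Qed.

Lemma vtm_neq_succ z : vtm z <> vtm (z + 1).
Proof.
move=> e; apply: (@vtm_square_free z 1) => // y; rewrite ltnS leqn0 => /eqP ->.
by rewrite Z.add_0_r.
Qed.

Definition vtm_position (Y : nat) : nat := 3 * (Y %/ 2) + Y %% 2 + 1.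

(* [vtm] on the naturals with the letter 3 inserted before every second
   letter: positions 3q hold 3 and vtm Y sits at position [vtm_position Y]. *)
Definition spaced_vtm (l : nat) : nat :=
  if l %% 3 == 0 then 3 else vtm (Z.of_nat (2 * (l %/ 3) + l %% 3 - 1)).

Lemma spaced_vtm_mul3 l : l %% 3 = 0 -> spaced_vtm l = 3.
Proof. by rewrite /spaced_vtm => ->. Qed.

Lemma spaced_vtm_position Y : spaced_vtm (vtm_position Y) = vtm (Z.of_nat Y).
Proof.
rewrite /spaced_vtm /vtm_position ifF; last by apply/eqP; lia.
by congr (vtm (Z.of_nat _)); lia.
Qed.

Lemma spaced_vtm_cases l : l %% 3 = 0 \/ exists Y, l = vtm_position Y.
Proof.
have [|l_n3] := eqVneq (l %% 3) 0; [by left | right].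
by exists (2 * (l %/ 3) + l %% 3 - 1); rewrite /vtm_position; lia.
Qed.

Lemma spaced_vtm_le3 l : spaced_vtm l <= 3.
Proof. by rewrite /spaced_vtm; case: ifP => // _; apply: leq_trans (vtm_le2 _) _. Qed.

Lemma spaced_vtm_eq3 l : spaced_vtm l = 3 -> l %% 3 = 0.
Proof.
case: (spaced_vtm_cases l) => [//|[Y ->]].
by rewrite spaced_vtm_position => vtm3; have := vtm_le2 (Z.of_nat Y); rewrite vtm3.
Qed.

Lemma spaced_vtm_near x y : x <> y -> x <= y + 2 -> y <= x + 2 -> spaced_vtm x <> spaced_vtm y.
Proof.
case: (spaced_vtm_cases x) => [x3|[X ->]] xy xy2 yx2.
  by rewrite spaced_vtm_mul3 // => /esym/spaced_vtm_eq3; lia.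
case: (spaced_vtm_cases y) xy xy2 yx2 => [y3|[Y ->]] xy xy2 yx2.
  by rewrite (spaced_vtm_mul3 y3) => /spaced_vtm_eq3; rewrite /vtm_position; lia.
rewrite !spaced_vtm_position; move: xy xy2 yx2; rewrite /vtm_position => xy xy2 yx2.
have [->|->] : Y = X.+1 \/ X = Y.+1 by lia.
  by rewrite Nat2Z.inj_succ; exact: vtm_neq_succ.
by rewrite Nat2Z.inj_succ => /esym; exact: vtm_neq_succ.
Qed.

(* A square of length d >= 3 must align the letters 3, so 3 divides d and the
   letters between them form a square of length 2d/3 in [vtm]. *)
Lemma spaced_vtm_square_free l0 d : 0 < d ->
  ~ (forall s, s < d -> spaced_vtm (l0 + s) = spaced_vtm (l0 + d + s)).
Proof.
move=> d_gt0 square.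
have [d_le2|d_ge3] := leqP d 2.
  by have := square 0 d_gt0; rewrite !addn0; apply: spaced_vtm_near; lia.
set s0 := (3 - l0 %% 3) %% 3.
have := square s0 ltac:(lia); rewrite spaced_vtm_mul3; last by rewrite /s0; lia.
move=> /esym/spaced_vtm_eq3 l0d3; have [e de] : exists e, d = 3 * e.
  by exists (d %/ 3); rewrite /s0 in l0d3; lia.
set Y0 := 2 * (l0 %/ 3) + (l0 %% 3 == 2).
apply: (@vtm_square_free (Z.of_nat Y0) (2 * e)); first lia.
move=> y y_lt.
have := square (vtm_position (Y0 + y) - l0).
have -> : l0 + (vtm_position (Y0 + y) - l0) = vtm_position (Y0 + y).
  by rewrite /vtm_position /Y0; case: eqP; lia.
have -> : l0 + d + (vtm_position (Y0 + y) - l0) = vtm_position (Y0 + y + 2 * e).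
  by rewrite /vtm_position /Y0 de; case: eqP; lia.
rewrite !spaced_vtm_position !Nat2Z.inj_add => -> //.
by rewrite /vtm_position /Y0; case: eqP; lia.
Qed.

Definition lipschitz_at (w : nat -> nat) (i : nat) : Prop :=
  w i.+1 <= w i + 1 /\ w i <= w i.+1 + 1.

Lemma lipschitz_ivt (w : nat -> nat) lo hi x : lo <= hi ->
  (forall i, lo <= i < hi -> lipschitz_at w i) ->
  w lo <= x <= w hi \/ w hi <= x <= w lo -> exists2 j, lo <= j <= hi & w j = x.
Proof.
elim: hi => [|hi IHhi] lo_le lip x_in.
  by exists lo => //; move: x_in; rewrite (_ : lo = 0) //; lia.
have [x_hi|x_nhi] := eqVneq x (w hi.+1); first by exists hi.+1 => //; lia.
have [lo_hi|hi_lt] := leqP lo hi; last first.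
  have lo_eq : lo = hi.+1 by lia.
  by move: x_nhi x_in; rewrite lo_eq; exists hi.+1; lia.
have [step1 step2] := lip hi ltac:(lia).
have [j j_in wj] : exists2 j, lo <= j <= hi & w j = x.
  by apply: IHhi => // [i i_in|]; [apply: lip; lia | move/eqP: x_nhi; lia].
by exists j => //; lia.
Qed.

Lemma last_before (P : pred nat) i1 i2 : P i1 -> i1 < i2 ->
  exists p, [/\ i1 <= p < i2, P p & forall q, p < q < i2 -> ~~ P q].
Proof.
move=> Pi1; elim: i2 => [//|i2 IHi2] i1_le.
have [Pi2|nPi2] := boolP (P i2).
  by exists i2; split=> // [|q]; lia.
have [i1i2|i1_lt] : i1 = i2 \/ i1 < i2 by lia.
  by move: nPi2; rewrite -i1i2 Pi1.
have [p [p_in Pp later]] := IHi2 i1_lt; exists p; split=> // [|q q_in]; first lia.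
by have [->|] := eqVneq q i2; [|move=> q_ni2; apply: later; lia].
Qed.

Lemma const_or_last_change (w : nat -> nat) n :
  (forall j, j <= n -> w j = w n) \/ exists p, [/\ p < n, w p != w n & w p.+1 = w n].
Proof.
case: (boolP (has (fun j => w j != w n) (iota 0 n))) => [/hasP [j j_in wj]|/hasPn const].
  right; rewrite mem_iota in j_in.
  have [p [p_in wp later]] := @last_before (fun q => w q != w n) j n.+1 wj ltac:(lia).
  have /eqP p_ne : p != n by apply: contraNneq wp => ->.
  by exists p; split=> //; [lia | apply/eqP/negPn/later; lia].
left=> j j_le; have [->//|j_lt] : j = n \/ j < n by lia.
by apply/eqP/negPn/const; rewrite mem_iota; lia.
Qed.

Section SquareWalk.
Variable f : nat -> nat.
Hypothesis f_near : forall x y, x <> y -> x <= y + 2 -> y <= x + 2 -> f x <> f y.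
Hypothesis f_square_free :
  forall l0 d, 0 < d -> ~ (forall s, s < d -> f (l0 + s) = f (l0 + d + s)).

Variables (w : nat -> nat) (m : nat).
Hypothesis w_lipschitz : forall i, i.+1 < 2 * m -> lipschitz_at w i.
Hypothesis w_square : forall i, i < m -> f (w i) = f (w (i + m)).

Definition walk_translated n := forall i, i <= n -> w (i + m) + w 0 = w m + w i.
Definition walk_mirrored n := forall i, i <= n -> w (i + m) + w i = w m + w 0.

Lemma walk_same_iff a b : a < m -> b < m ->
  w a <= w b + 2 -> w b <= w a + 2 -> w (a + m) <= w (b + m) + 2 -> w (b + m) <= w (a + m) + 2 ->
  w a = w b <-> w (a + m) = w (b + m).
Proof.
move=> a_lt b_lt *; split=> e.
  have [//|/eqP ne] := eqVneq (w (a + m)) (w (b + m)).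
  by case: (f_near ne) => //; rewrite -(w_square a_lt) -(w_square b_lt) e.
have [//|/eqP ne] := eqVneq (w a) (w b).
by case: (f_near ne) => //; rewrite (w_square a_lt) (w_square b_lt) e.
Qed.

(* As f separates values at distance at most 2, every step of the walk on
   [0, m] is copied on [m, 2m] up to a sign, and the sign cannot change. *)
Lemma walk_dichotomy n : n < m -> walk_translated n \/ walk_mirrored n.
Proof.
elim: n => [|n IHn] n_lt; first by left=> i; rewrite leqn0 => /eqP ->.
have IH := IHn (ltnW n_lt).
have [A1 A2] := w_lipschitz (i := n) ltac:(lia).
have [B1 B2] := w_lipschitz (i := n + m) ltac:(lia); rewrite -addSn in B1 B2.
have same_next := @walk_same_iff n.+1 n n_lt (ltnW n_lt).
have [stay|/eqP move] := eqVneq (w n.+1) (w n).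
  have stay' : w (n.+1 + m) = w (n + m) by apply/same_next; lia.
  by case: IH => R; [left|right] => i; rewrite leq_eqVlt ltnS => /orP [/eqP ->|/R];
    have := R n (leqnn n); lia.
have move' : w (n.+1 + m) <> w (n + m) by move=> e; apply: move; apply/same_next; lia.
case: (const_or_last_change w n) => [const|[p [p_lt /eqP wp wp1]]].
  have base i : i <= n -> w i = w 0 /\ w (i + m) = w m.
    move=> i_le; have := const i i_le; have := const 0 (leq0n n).
    by case: IH => R; have := R i i_le; lia.
  have [wn wnm] := base n (leqnn n).
  have [e|/eqP ne] := eqVneq (w (n.+1 + m) + w 0) (w m + w n.+1); [left|right] => i;
    by rewrite leq_eqVlt ltnS => /orP [/eqP ->|/base]; lia.
have [C1 C2] := w_lipschitz (i := p) ltac:(lia).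
have back := @walk_same_iff n.+1 p n_lt (ltn_trans p_lt (ltnW n_lt)).
by case: IH => R; [left|right] => i; rewrite leq_eqVlt ltnS => /orP [/eqP ->|/R];
  have := R n (leqnn n); have := R p (ltnW p_lt); lia.
Qed.

(* A translation by d <> 0 would make f repeat with period |d| along the
   values swept by the walk, which is a square in f. *)
Lemma walk_translated_fixed : 0 < m -> walk_translated m.-1 -> w 0 = w m.
Proof.
move=> m_gt0 R.
have lip i : 0 <= i < m -> lipschitz_at w i by move=> ?; apply: w_lipschitz; lia.
have value x : w 0 <= x <= w m \/ w m <= x <= w 0 -> x <> w m ->
    exists j, [/\ j < m, w j = x & w (j + m) + w 0 = w m + x].
  move=> x_in x_nm; have [j j_in wj] := lipschitz_ivt (leq0n m) lip x_in.
  have [j_lt|m_le] := ltnP j m; first by exists j; split=> //; rewrite -wj R; lia.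
  by case: x_nm; rewrite -wj; congr w; lia.
have [lt|gt|//] := ltngtP (w 0) (w m).
  exfalso; apply: (f_square_free (l0 := w 0) (d := w m - w 0)); first lia.
  move=> s s_lt; have [j [j_lt wj wjm]] := value (w 0 + s) ltac:(lia) ltac:(lia).
  by rewrite -wj w_square //; congr f; lia.
have [j0 [_ _ wj0m]] := value (w m + 1) ltac:(lia) ltac:(lia).
exfalso; apply: (f_square_free (l0 := w m + 1 - (w 0 - w m)) (d := w 0 - w m)); first lia.
move=> s s_lt; have [j [j_lt wj wjm]] := value (w m + 1 + s) ltac:(lia) ltac:(lia).
have -> : w m + 1 - (w 0 - w m) + (w 0 - w m) + s = w j by lia.
by rewrite w_square //; congr f; lia.
Qed.

(* Under a reflection x |-> K - x the walk must cross the midpoint K / 2,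
   where f would take the same value at two points at distance at most 2. *)
Lemma walk_mirrored_fixed i : walk_mirrored m.-1 -> i < m -> w i = w (i + m).
Proof.
move=> R i_lt; set K := w m + w 0.
have Ri j : j < m -> w (j + m) + w j = K by move=> j_lt; apply: R; lia.
have f_reflect j : i <= j <= i + m -> f (w j) = f (K - w j).
  move=> j_in; have [j_lt|m_le] := ltnP j m.
    by rewrite w_square //; congr f; have := Ri j j_lt; lia.
  have jm_lt : j - m < m by lia.
  have := w_square jm_lt; rewrite subnK // => <-; congr f; have := Ri _ jm_lt.
  by rewrite subnK //; lia.
have [//|/eqP ne] := eqVneq (w i) (w (i + m)); exfalso.
have lip q : i <= q < i + m -> lipschitz_at w q by move=> ?; apply: w_lipschitz; lia.
have [j j_in wj] := @lipschitz_ivt w i (i + m) ((K - 1) %/ 2) (leq_addr _ _) lip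
  ltac:(have := Ri i i_lt; lia).
have Rii := Ri i i_lt; apply: (f_near (x := w j) (y := K - w j)); try lia.
exact: f_reflect.
Qed.

Lemma walk_square_fixed i : 0 < m -> i < m -> w i = w (i + m).
Proof.
move=> m_gt0 i_lt; case: (@walk_dichotomy m.-1 ltac:(lia)) => [R|R].
  by have := R i ltac:(lia); have := walk_translated_fixed m_gt0 R; lia.
exact: walk_mirrored_fixed.
Qed.

End SquareWalk.

Lemma count_iota_hit (a : pred nat) n y : y < count a (iota 0 n) ->
  exists2 i, i < n & a i && (count a (iota 0 i) == y).
Proof.
elim: n => [//|n IHn]; rewrite -[n.+1]addn1 iotaD count_cat /= addn0 add0n => y_lt.
have [y_lt'|y_ge] := ltnP y (count a (iota 0 n)).
  by have [i i_lt hit] := IHn y_lt'; exists i => //; lia.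
by exists n; [lia | case: (a n) y_lt => /=; rewrite ?eqn_leq ?y_ge ?andbT; lia].
Qed.

Section MinLayerCounters.
Variables (L : nat -> nat) (c : nat -> Z) (n t : nat).
Hypothesis counter_step : forall i j, i < j < n -> L i = L j ->
  (forall q, i < q < j -> L j < L q) -> c j = (c i + 1)%Z.
Hypothesis t_min : forall i, i < n -> t <= L i.

Definition count_min_layer (i : nat) : nat := count (fun q => L q == t) (iota 0 i).

Lemma count_min_layerS i : count_min_layer i.+1 = count_min_layer i + (L i == t).
Proof. by rewrite /count_min_layer -addn1 iotaD count_cat /= add0n addn0. Qed.

Lemma count_min_layer_mono i j : i <= j -> count_min_layer i <= count_min_layer j.
Proof.
move=> /subnKC <-; elim: (j - i) => [|d IHd]; rewrite ?addn0 // addnS count_min_layerS.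
lia.
Qed.

(* Between two consecutive occurrences of the minimal layer t all layers are
   larger, so the counter increases by one from each occurrence to the next. *)
Lemma counter_min_layer i1 i2 : i1 <= i2 < n -> L i1 = t -> L i2 = t ->
  c i2 = (c i1 + Z.of_nat (count_min_layer i2 - count_min_layer i1))%Z.
Proof.
elim/ltn_ind: i2 => i2 IHi2 i_in Li1 Li2.
have [i12|i1_lt] : i1 = i2 \/ i1 < i2 by lia.
  by rewrite i12 subnn Z.add_0_r.
have [p [p_in /eqP Lp later]] := @last_before (fun q => L q == t) i1 i2 (introT eqP Li1) i1_lt.
have count_p : count_min_layer i2 = (count_min_layer p).+1.
  rewrite -(subnKC (ltnW (proj2 (andP p_in)))) /count_min_layer iotaD count_cat add0n.
  have none : count (fun q => L q == t) (iota p.+1 (i2 - p).-1) = 0.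
    apply/eqP; rewrite -leqn0 leqNgt -has_count; apply/hasPn => q.
    by rewrite mem_iota => q_in; apply: later; lia.
  have -> : i2 - p = (i2 - p).-1.+1 by lia.
  by rewrite /= Lp eqxx none addn1.
have := IHi2 p ltac:(lia) ltac:(lia) Li1 Lp.
have := count_min_layer_mono (i := i1) (j := p) ltac:(lia).
rewrite (counter_step (i := p) (j := i2)) ?Lp ?Li2 //; [lia | lia |].
by move=> q q_in; have := t_min (i := q) ltac:(lia); move/eqP: (later q q_in); lia.
Qed.

End MinLayerCounters.

(* The occurrences of the lowest layer repeat with period m, r of them in each
   period, so by [counter_min_layer] their counters form a square of length r
   in [vtm]. *)
Lemma layer_counter_square_free (L : nat -> nat) (c : nat -> Z) m : 0 < m ->
  (forall i j, i < j < 2 * m -> L i = L j ->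
     (forall q, i < q < j -> L j < L q) -> c j = (c i + 1)%Z) ->
  (forall i, i < m -> L i = L (i + m)) ->
  ~ (forall i, i < m -> vtm (c i) = vtm (c (i + m))).
Proof.
move=> m_gt0 step L_per vtm_per.
have layer_ex : exists k, has (fun i => L i == k) (iota 0 (2 * m)).
  by exists (L 0); apply/hasP; exists 0; rewrite ?mem_iota //; lia.
case: (ex_minnP layer_ex) => t /hasP [i0 i0_in /eqP Li0] t_least.
have t_min i : i < 2 * m -> t <= L i.
  by move=> i_lt; apply: t_least; apply/hasP; exists i; rewrite ?mem_iota //; lia.
set cnt := count_min_layer L t; set r := cnt m.
have cnt_shift i : i <= m -> cnt (i + m) = r + cnt i.
  move=> i_le; rewrite addnC /cnt /count_min_layer iotaD count_cat add0n; congr (_ + _).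
  rewrite -[m in iota m]addn0 iotaDl count_map; apply: eq_in_count => q.
  by rewrite mem_iota => q_in /=; rewrite addnC -L_per //; lia.
have r_gt0 : 0 < r.
  rewrite /r /cnt /count_min_layer -has_count; apply/hasP.
  move: i0_in; rewrite mem_iota => i0_in.
  have [i0_lt|m_le] := ltnP i0 m; first by exists i0; rewrite ?mem_iota ?Li0.
  exists (i0 - m); first by rewrite mem_iota; lia.
  by rewrite (L_per (i0 - m)) ?subnK ?Li0 //; lia.
have hit y : y < r -> exists2 i, i < m & (L i == t) && (cnt i == y).
  exact: count_iota_hit.
have [i1 i1_lt /andP [/eqP Li1 /eqP cnt_i1]] := hit 0 r_gt0.
apply: (@vtm_square_free (c i1) r r_gt0) => y y_lt.
have [i i_lt /andP [/eqP Li /eqP cnt_i]] := hit y y_lt.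
have i1_le : i1 <= i.
  case: leqP => // i_lt1; have := count_min_layer_mono L t i_lt1.
  by rewrite count_min_layerS -/cnt Li eqxx cnt_i1; lia.
have Lim : L (i + m) = t by rewrite -L_per.
have := vtm_per i i_lt.
rewrite (counter_min_layer step t_min (i1 := i) (i2 := i + m)) //; try lia.
rewrite (counter_min_layer step t_min (i1 := i1) (i2 := i)) //; try lia.
rewrite -/cnt cnt_shift ?cnt_i ?cnt_i1 ?subn0 ?addnK //; lia.
Qed.

Notation letter := (nat * Z)%type.

Definition layer (s : seq letter) (i : nat) : nat := (nth (0, 0%Z) s i).1.
Definition counter (s : seq letter) (i : nat) : Z := (nth (0, 0%Z) s i).2.

Definition well_layered (s : seq letter) : Prop :=
  (forall i, i.+1 < size s -> lipschitz_at (layer s) i) /\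
  (forall i j, i < j < size s -> layer s i = layer s j ->
     (forall q, i < q < j -> layer s j < layer s q) -> counter s j = (counter s i + 1)%Z).

Lemma well_layered_pred s i : well_layered s -> 0 < i < size s ->
  layer s i <= layer s i.-1 + 1 /\ layer s i.-1 <= layer s i + 1.
Proof.
case=> s_lip _ /andP [i_gt0 i_lt].
by have := s_lip i.-1; rewrite /lipschitz_at prednK //; apply.
Qed.

Definition colour (e : letter) : 'I_12 := inord (spaced_vtm e.1 * 3 + vtm e.2).

Lemma colour_eq_codes e e' : colour e = colour e' ->
  spaced_vtm e.1 = spaced_vtm e'.1 /\ vtm e.2 = vtm e'.2.
Proof.
move=> /(congr1 val); rewrite /colour /= !inordK; last 2 first.
- by have := spaced_vtm_le3 e'.1; have := vtm_le2 e'.2; lia.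
- by have := spaced_vtm_le3 e.1; have := vtm_le2 e.2; lia.
by have := vtm_le2 e.2; have := vtm_le2 e'.2; lia.
Qed.

Lemma nth_square (T : Type) (x0 : T) u X v i : i < size X ->
  nth x0 (u ++ X ++ X ++ v) (size u + i) = nth x0 (u ++ X ++ X ++ v) (size u + i + size X).
Proof.
move=> i_lt; rewrite !nth_cat; do !case: ltnP => ?; try lia.
by congr (nth _ _ _); lia.
Qed.

Lemma well_layered_square_free s : well_layered s -> square_free (map colour s).
Proof.
move=> [s_lip s_counter] u X v s_eq.
have [/size0nil //|X_gt0] := posnP (size X); exfalso.
set k := size u; set m := size X.
have size_s : k + 2 * m <= size s.
  by have := congr1 size s_eq; rewrite size_map !size_cat; lia.
have colour_sq i : i < m -> colour (nth (0, 0%Z) s (k + i)) = colour (nth (0, 0%Z) s (k + (i + m))).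
  move=> i_lt; rewrite -(nth_map _ (colour (0, 0%Z)) _ (n := k + i)); last lia.
  rewrite -(nth_map _ (colour (0, 0%Z)) _ (n := k + (i + m))); last lia.
  by rewrite s_eq addnA nth_square.
pose L i := layer s (k + i).
have L_per : forall i, i < m -> L i = L (i + m).
  move=> i0 i0_lt; apply: (walk_square_fixed spaced_vtm_near spaced_vtm_square_free (w := L)) => //.
    by move=> i i_lt; rewrite /lipschitz_at /L addnS; apply: s_lip; lia.
  by move=> i i_lt; exact: (colour_eq_codes (colour_sq i i_lt)).1.
apply: (@layer_counter_square_free L (fun i => counter s (k + i)) m X_gt0) => //.
  move=> i j ij_lt Lij between; apply: s_counter => //; first lia.
  by move=> q q_in; have := between (q - k) ltac:(lia); rewrite /L subnKC //; lia.
by move=> i i_lt; exact: (colour_eq_codes (colour_sq i i_lt)).2.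
Qed.

Lemma size_extension (T : Type) (s : seq T) i x :
  i <= size s -> size (extension s i x) = (size s).+1.
Proof. by move=> i_le; rewrite /extension size_cat /= size_take size_drop; case: ltnP; lia. Qed.

Lemma nth_extension_at (T : Type) (x0 : T) s i x :
  i <= size s -> nth x0 (extension s i x) i = x.
Proof. by move=> i_le; rewrite /extension nth_cat size_takel // ltnn subnn. Qed.

Lemma bump_lt i q : q < i -> bump i q = q.
Proof. by move=> q_lt; rewrite /bump leqNgt q_lt. Qed.

Lemma bump_ge i q : i <= q -> bump i q = q.+1.
Proof. by rewrite /bump => ->. Qed.

Lemma ltn_bump2 i a b : (bump i a < bump i b) = (a < b).
Proof. by rewrite !ltnNge leq_bump2. Qed.

Lemma nth_extension_bump (T : Type) (x0 : T) s i x q :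
  i <= size s -> nth x0 (extension s i x) (bump i q) = nth x0 s q.
Proof.
move=> i_le; rewrite /extension nth_cat size_takel //.
have [q_lt|i_le_q] := ltnP q i; first by rewrite bump_lt // q_lt nth_take.
by rewrite bump_ge // ltnNge leqW //= subSn //= nth_drop subnKC.
Qed.

Section Extension.
Variables (s : seq letter) (i : nat) (x : letter).
Hypothesis s_layered : well_layered s.
Hypothesis i_le : i <= size s.
Hypothesis x_left : 0 < i -> layer s i.-1 <= x.1 <= (layer s i.-1).+1 /\
  (x.1 = layer s i.-1 -> x.2 = (counter s i.-1 + 1)%Z).
Hypothesis x_right : i < size s -> layer s i <= x.1 <= (layer s i).+1 /\
  (x.1 = layer s i -> counter s i = (x.2 + 1)%Z).

Let s' := extension s i x.

Lemma layer_extension_at : layer s' i = x.1.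
Proof. by rewrite /layer nth_extension_at. Qed.

Lemma counter_extension_at : counter s' i = x.2.
Proof. by rewrite /counter nth_extension_at. Qed.

Lemma layer_extension_bump q : layer s' (bump i q) = layer s q.
Proof. by rewrite /layer nth_extension_bump. Qed.

Lemma counter_extension_bump q : counter s' (bump i q) = counter s q.
Proof. by rewrite /counter nth_extension_bump. Qed.

Lemma layer_extension_lt q : q < i -> layer s' q = layer s q.
Proof. by move=> q_lt; rewrite -layer_extension_bump bump_lt. Qed.

Lemma layer_extension_gt q : i < q -> layer s' q = layer s q.-1.
Proof. by move=> q_gt; rewrite -layer_extension_bump bump_ge ?prednK //; lia. Qed.

Lemma counter_extension_lt q : q < i -> counter s' q = counter s q.
Proof. by move=> q_lt; rewrite -counter_extension_bump bump_lt. Qed.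

Lemma counter_extension_gt q : i < q -> counter s' q = counter s q.-1.
Proof. by move=> q_gt; rewrite -counter_extension_bump bump_ge ?prednK //; lia. Qed.

Lemma extension_lipschitz j : j.+1 < size s' -> lipschitz_at (layer s') j.
Proof.
rewrite /s' size_extension // => j_lt; case: s_layered => s_lip _.
have lip q : q.+1 < size s -> layer s q.+1 <= layer s q + 1 /\ layer s q <= layer s q.+1 + 1.
  exact: s_lip.
rewrite /lipschitz_at; have [j1_lt|i_lt|j1_eq] := ltngtP j.+1 i.
- by rewrite !layer_extension_lt //; [apply: lip | ]; lia.
- have [j_eq|j_gt] : j = i \/ i < j by lia.
    by rewrite j_eq layer_extension_at layer_extension_gt //=; have := x_right; lia.
  rewrite !layer_extension_gt //=; try lia.
  by have := lip j.-1; rewrite prednK; lia.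
- rewrite j1_eq layer_extension_at layer_extension_lt; last lia.
  by have := x_left; rewrite -j1_eq /=; lia.
Qed.

Lemma extension_counter j1 j2 : j1 < j2 < size s' -> layer s' j1 = layer s' j2 ->
  (forall q, j1 < q < j2 -> layer s' j2 < layer s' q) ->
  counter s' j2 = (counter s' j1 + 1)%Z.
Proof.
rewrite /s' size_extension // => j_lt L_eq above; case: s_layered => _ s_counter.
have [j1_i|j1_ni] := eqVneq j1 i.
  subst j1; have [j2_eq|j2_gt] : j2 = i.+1 \/ i.+1 < j2 by lia.
    move: L_eq; rewrite j2_eq layer_extension_at counter_extension_at layer_extension_gt //.
    by rewrite counter_extension_gt //= => /(proj2 (x_right _)) ->; lia.
  have := above i.+1 ltac:(lia); rewrite -L_eq layer_extension_at layer_extension_gt //=.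
  by have := x_right; lia.
have [j2_i|j2_ni] := eqVneq j2 i.
  subst j2; have [j1_eq|j1_lt] : j1 = i.-1 \/ j1 < i.-1 by lia.
    move: L_eq; rewrite j1_eq layer_extension_at counter_extension_at.
    rewrite layer_extension_lt; last lia.
    by rewrite counter_extension_lt; [move=> /esym/(proj2 (x_left _)) ->|]; lia.
  have := above i.-1 ltac:(lia); rewrite layer_extension_at layer_extension_lt; last lia.
  by have := x_left; lia.
have e1 : bump i (unbump i j1) = j1 := unbumpK j1_ni.
have e2 : bump i (unbump i j2) = j2 := unbumpK j2_ni.
move: j_lt L_eq above; rewrite -e1 -e2 !layer_extension_bump !counter_extension_bump.
set q1 := unbump i j1; set q2 := unbump i j2; move=> q_lt L_eq above.
have q12 : q1 < q2 by rewrite -(ltn_bump2 i); lia.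
have q2_lt : q2 < size s.
  by have [q2_lt_i|i_le_q2] := ltnP q2 i; [lia | move: q_lt; rewrite (bump_ge i_le_q2); lia].
apply: s_counter => // [|q q_in]; first lia.
rewrite -(layer_extension_bump q); apply: above.
by rewrite !ltn_bump2.
Qed.

Lemma well_layered_extension : well_layered s'.
Proof. by split; [exact: extension_lipschitz | exact: extension_counter]. Qed.

End Extension.

Definition next_letter (s : seq letter) (i : nat) : letter :=
  let from_right := (layer s i, (counter s i - 1)%Z) in
  let from_left := (layer s i.-1, (counter s i.-1 + 1)%Z) in
  if i == 0 then from_right
  else if size s <= i then from_left
  else if layer s i.-1 < layer s i then from_right
  else if layer s i < layer s i.-1 then from_left
  else ((layer s i).+1, 0%Z).

Section NextLetter.
Variables (s : seq letter) (i : nat).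
Hypothesis s_layered : well_layered s.
Let x := next_letter s i.

Lemma next_letter_left : 0 < i -> layer s i.-1 <= x.1 <= (layer s i.-1).+1 /\
  (x.1 = layer s i.-1 -> x.2 = (counter s i.-1 + 1)%Z).
Proof.
move=> i_gt0; rewrite /x /next_letter eqn0Ngt i_gt0 /=.
case: (leqP (size s) i) => [_|i_lt] /=; first by split=> [|e]; lia.
have [l1 l2] := well_layered_pred s_layered (i := i) ltac:(lia).
case: (ltnP (layer s i.-1) (layer s i)) => /= lt_ab; first by split=> [|e]; lia.
by case: (ltnP (layer s i) (layer s i.-1)) => /= le_ab; split=> [|e]; lia.
Qed.

Lemma next_letter_right : i < size s -> layer s i <= x.1 <= (layer s i).+1 /\
  (x.1 = layer s i -> counter s i = (x.2 + 1)%Z).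
Proof.
move=> i_lt; rewrite /x /next_letter.
have [->|i_gt0] := posnP i; first by split=> [|e] /=; lia.
rewrite (leqNgt (size s) i) i_lt /=.
have [l1 l2] := well_layered_pred s_layered (i := i) ltac:(lia).
case: (ltnP (layer s i.-1) (layer s i)) => /= lt_ab; first by split=> [|e]; lia.
by case: (ltnP (layer s i) (layer s i.-1)) => /= le_ab; split=> [|e]; lia.
Qed.

Lemma well_layered_next : i <= size s -> well_layered (extension s i x).
Proof.
move=> i_le; apply: well_layered_extension => //.
  exact: next_letter_left.
exact: next_letter_right.
Qed.

End NextLetter.

Lemma well_layered_nil : well_layered [::].
Proof. by split=> [i|i j] /=; lia. Qed.

(* Positions beyond the end of the word are clamped to the end; this never
   happens at the valid addresses of the tree. *)
Definition tree_word (p : seq nat) : seq letter :=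
  foldl (fun s i => extension s (minn i (size s)) (next_letter s (minn i (size s)))) [::] p.

Lemma tree_word_rcons p i : i <= size (tree_word p) ->
  tree_word (rcons p i) = extension (tree_word p) i (next_letter (tree_word p) i).
Proof. by move=> i_le; rewrite /tree_word -cats1 foldl_cat /= -/(tree_word p) (minn_idPl i_le). Qed.

Lemma well_layered_tree_word p : well_layered (tree_word p).
Proof.
elim/last_ind: p => [|p i IHp]; first exact: well_layered_nil.
rewrite /tree_word -cats1 foldl_cat /= -/(tree_word p).
by apply: well_layered_next => //; exact: geq_minr.
Qed.

Lemma map_extension (T U : Type) (f : T -> U) s i x :
  map f (extension s i x) = extension (map f s) i (f x).
Proof. by rewrite /extension map_cat map_take /= map_drop. Qed.

Theorem mainTheorem5 :
  exists T : seq nat -> seq 'I_12, complete_bifurcate_tree T.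
Proof.
exists (fun p => map colour (tree_word p)) => p _.
have layered := well_layered_tree_word p.
split; first split; first exact: well_layered_square_free.
  move=> i; rewrite size_map => i_le; exists (colour (next_letter (tree_word p) i)).
  by rewrite -map_extension; apply/well_layered_square_free/well_layered_next.
move=> i; rewrite size_map => i_le; exists (colour (next_letter (tree_word p) i)).
by rewrite tree_word_rcons // map_extension.
Qed.
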